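(* Let $n\ge 2$ and let $|\psi_1\rangle,|\psi_2\rangle\in S^{2n-1}$ be two non-equivalent quantum states, i.e. $|\psi_1\rangle\notin[|\psi_2\rangle]$. Then there exist $\varepsilon>0$ and a self-adjoint $n\times n$ matrix $H'$ with $\|H'\|_{HS}=1$ and $H'\neq I$ such that $$|\psi_1\rangle=e^{i\varepsilon H'}|\psi_2\rangle .$$ Moreover, neither $|\psi_1\rangle$ nor $|\psi_2\rangle$ is an eigenvector of $H'$.
   Context: $S^{2n-1}$ denotes the unit sphere of $\mathbb{C}^n$ with the standard inner product $\langle\cdot|\cdot\rangle$; its elements are (pure) quantum states. For $|\psi\rangle\in S^{2n-1}$ the equivalence class is $[|\psi\rangle]=\{e^{i\varrho}|\psi\rangle:\varrho\in\mathbb{R}\}$, and two states are equivalent if one lies in the equivalence class of the other. $\|\cdot\|_{HS}$ is the Hilbert–Schmidt norm. *)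

From HB Require Import structures.
From mathcomp Require Import all_boot all_order all_algebra.
From mathcomp Require Import all_classical all_reals all_analysis.
From mathcomp Require Import complex.
Import numFieldNormedType.Exports.
Set Implicit Arguments. Unset Strict Implicit. Unset Printing Implicit Defensive.
Import Order.TTheory GRing.Theory Num.Theory.
Local Open Scope ring_scope.
Local Open Scope complex_scope.

Definition adjmx (R : realType) (n m : nat) (A : 'M[R[i]]_(n, m)) : 'M[R[i]]_(m, n) :=
  map_mx (fun z : R[i] => z^*) A^T.

Definition selfadjoint (R : realType) (n : nat) (H : 'M[R[i]]_n) : Prop :=
  adjmx H = H.

Definition inner (R : realType) (n : nat) (u v : 'cV[R[i]]_n) : R[i] :=
  \sum_(k < n) (u k 0)^* * v k 0.

Definition on_sphere (R : realType) (n : nat) (psi : 'cV[R[i]]_n) : Prop :=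
  inner psi psi = 1.

Definition expi (R : realType) (rho : R) : R[i] := (cos rho) +i* (sin rho).

Definition eq_class (R : realType) (n : nat) (psi : 'cV[R[i]]_n) : set 'cV[R[i]]_n :=
  [set phi | exists rho : R, phi = expi rho *: psi].

Definition hs_norm (R : realType) (n : nat) (A : 'M[R[i]]_n) : R :=
  Num.sqrt (\sum_(i < n) \sum_(j < n) (complex.Re (A i j) ^+ 2 + complex.Im (A i j) ^+ 2)).

Definition expmx_partial (R : realType) (n : nat) (A : 'M[R[i]]_n) (N : nat)
  : 'M[R[i]]_n :=
  \sum_(k < N) ((k`!)%:R)^-1 *: A ^+ k.

Definition expmx (R : realType) (n : nat) (A : 'M[R[i]]_n) : 'M[R[i]]_n :=
  \matrix_(i, j)
    ((limn (fun N : nat => (complex.Re (expmx_partial A N i j) : R))) +i*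
     (limn (fun N : nat => (complex.Im (expmx_partial A N i j) : R)))).

Definition eigenvector (R : realType) (n : nat) (H : 'M[R[i]]_n) (psi : 'cV[R[i]]_n) : Prop :=
  psi != 0 /\ exists lambda : R[i], H *m psi = lambda *: psi.

From HB Require Import structures.
From mathcomp Require Import all_boot all_order all_algebra.
From mathcomp Require Import all_classical all_reals all_analysis.
From mathcomp Require Import complex.
From mathcomp Require Import ring lra.
Import numFieldNormedType.Exports.
Set Implicit Arguments. Unset Strict Implicit. Unset Printing Implicit Defensive.
Import Order.TTheory GRing.Theory Num.Theory.
Local Open Scope ring_scope.
Local Open Scope complex_scope.
Local Open Scope classical_set_scope.

(* Let u = psi1 - psi2 and let P = u u^* / <u|u> be the orthogonal projection
   onto the line C u.  For unit vectors, P psi1 = w P psi2 with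
   w = - conj (1 - z) / (1 - z), z = <psi1|psi2>, a number of modulus one, and
   psi1 - psi2 lies in the range of P; hence psi1 = ((1 - P) + w P) psi2.
   As P is idempotent, exp (i eps P) = (1 - P) + e^(i eps) P, so choosing
   e^(i eps) = w gives the rotation with H' = P.  A rank-one orthogonal
   projection has Hilbert-Schmidt norm 1 and trace 1 < n, and if psi1 or psi2
   were an eigenvector of P, the unitary (1 - P) + w P would merely rescale it,
   making the two states equivalent. *)

Local Notation Re := complex.Re.
Local Notation Im := complex.Im.

Section ComplexNumbers.
Variable R : realType.
Implicit Types (x y : R[i]) (e rho : R).

Lemma ReD x y : Re (x + y) = Re x + Re y.
Proof. exact: raddfD. Qed.

Lemma ImD x y : Im (x + y) = Im x + Im y.
Proof. exact: raddfD. Qed.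

Lemma ReM x y : Re (x * y) = Re x * Re y - Im x * Im y.
Proof. by case: x y => a b [c d]. Qed.

Lemma ImM x y : Im (x * y) = Re x * Im y + Im x * Re y.
Proof. by case: x y => a b [c d] /=; ring. Qed.

Lemma Re_mul_conj x : Re (x * x^*) = Re x ^+ 2 + Im x ^+ 2.
Proof. by case: x => a b /=; ring. Qed.

Lemma expr_imag e k :
  Re ((0 +i* e) ^+ k) = (~~ odd k)%:R * (-1) ^+ k./2 * e ^+ k /\
  Im ((0 +i* e) ^+ k) = (odd k)%:R * (-1) ^+ k.-1./2 * e ^+ k.
Proof.
elim: k => [|k [IHre IHim]]; first by rewrite expr0 /=; split; ring.
rewrite exprSr ReM ImM IHre IHim /= uphalf_half.
case k_odd: (odd k) => /=; split;
  rewrite ?exprD ?expr1 ?expr0 ?[e ^+ k.+1]exprSr; try ring.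
suff -> : k.-1./2 = k./2 by ring.
by rewrite -{1}(odd_double_half k) k_odd add1n /= doubleK.
Qed.

Lemma Re_realM (r : R) x : Re (r%:C * x) = r * Re x.
Proof. by rewrite ReM /=; ring. Qed.

Lemma Im_realM (r : R) x : Im (r%:C * x) = r * Im x.
Proof. by rewrite ImM /=; ring. Qed.

Lemma inv_fact_complex k : (k`!%:R : R[i])^-1 = (k`!%:R^-1 : R)%:C.
Proof. by rewrite fmorphV rmorph_nat. Qed.

Lemma Re_expi_partial e N :
  Re (\sum_(k < N) (k`!%:R)^-1 * (0 +i* e) ^+ k) = series (cos_coeff e) N.
Proof.
rewrite /series /= big_mkord raddf_sum; apply: eq_bigr => k _ /=.
by rewrite inv_fact_complex Re_realM (expr_imag e k).1 /cos_coeff /= -exprnP; ring.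
Qed.

Lemma Im_expi_partial e N :
  Im (\sum_(k < N) (k`!%:R)^-1 * (0 +i* e) ^+ k) = series (sin_coeff e) N.
Proof.
rewrite /series /= big_mkord raddf_sum; apply: eq_bigr => k _ /=.
by rewrite inv_fact_complex Im_realM (expr_imag e k).2 /sin_coeff /=; ring.
Qed.

Lemma cvg_series_cos_coeff e : series (cos_coeff e) @ \oo --> cos e.
Proof. by rewrite unlock; exact: is_cvg_series_cos_coeff. Qed.

Lemma cvg_series_sin_coeff e : series (sin_coeff e) @ \oo --> sin e.
Proof. by rewrite unlock; exact: is_cvg_series_sin_coeff. Qed.

(* [R[i]] carries no topology here: complex sequences converge componentwise,
   as in the definition of [expmx]. *)
Definition cvgC (s : nat -> R[i]) (a : R[i]) :=
  Re (s N) @[N --> \oo] --> Re a /\ Im (s N) @[N --> \oo] --> Im a.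

Lemma cvgC_affine s a b p : cvgC s a -> cvgC (fun N => b + s N * p) (b + a * p).
Proof.
case=> sRe sIm; split; rewrite ?ReD ?ImD ?ReM ?ImM.
- have -> : (fun N => Re (b + s N * p)) =
            (fun N => Re b + (Re (s N) * Re p - Im (s N) * Im p)).
    by apply/funext => N; rewrite ReD ReM.
  by apply: cvgD; [exact: cvg_cst | apply: cvgB; apply: cvgMr_tmp].
- have -> : (fun N => Im (b + s N * p)) =
            (fun N => Im b + (Re (s N) * Im p + Im (s N) * Re p)).
    by apply/funext => N; rewrite ImD ImM.
  by apply: cvgD; [exact: cvg_cst | apply: cvgD; apply: cvgMr_tmp].
Qed.

Lemma cvgC_expi_partial e :
  cvgC (fun N => \sum_(k < N.+1) (k`!%:R)^-1 * (0 +i* e) ^+ k) (expi e).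
Proof.
split; under eq_fun do rewrite ?Re_expi_partial ?Im_expi_partial.
- by move: (@cvg_series_cos_coeff e); rewrite -cvg_shiftS.
- by move: (@cvg_series_sin_coeff e); rewrite -cvg_shiftS.
Qed.

Lemma expi0 : expi 0 = 1 :> R[i].
Proof. by rewrite /expi cos0 sin0. Qed.

Lemma expiNK rho : expi (- rho) * expi rho = 1.
Proof.
apply/eqP; rewrite /expi cosN sinN eq_complex /= -(cos2Dsin2 rho).
by apply/andP; split; apply/eqP; ring.
Qed.

Lemma expi_onto x : x^* * x = 1 -> exists2 rho, 0 <= rho & expi rho = x.
Proof.
case: x => a b /eqP; rewrite eq_complex /= => /andP [/eqP ab1 _].
have a_bnd : -1 <= a <= 1 by apply/andP; split; nra.
have sin_acos_a : sin (acos a) = `|b|.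
  by rewrite sin_acos // -sqrtr_sqr; congr Num.sqrt; nra.
have acos_bnd := conj (acos_ge0 a_bnd) (acos_lepi a_bnd).
have cos_acos_a : cos (acos a) = a by rewrite acosK // in_itv.
have [b_ge0|b_lt0] := lerP 0 b.
  by exists (acos a); rewrite ?acos_bnd.1 // /expi cos_acos_a sin_acos_a ger0_norm.
exists (pi *+ 2 - acos a).
  by have := @pi_gt0 R; rewrite mulr2n; lra.
rewrite /expi addrC cosD2pi sinD2pi cosN sinN cos_acos_a sin_acos_a.
by rewrite ltr0_norm // opprK.
Qed.

End ComplexNumbers.

(* [adjmx] conjugates with [conjc], [inner] with [Num.conj]: the two are
   convertible but not syntactically equal, hence the occasional [^*%R]. *)
Section InnerProduct.
Variable R : realType.

Lemma adjmxK m n (A : 'M[R[i]]_(m, n)) : adjmx (adjmx A) = A.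
Proof. by apply/matrixP => i j; rewrite !mxE; exact: conjcK. Qed.

Lemma adjmxM m n p (A : 'M[R[i]]_(m, n)) (B : 'M[R[i]]_(n, p)) :
  adjmx (A *m B) = adjmx B *m adjmx A.
Proof. by rewrite /adjmx trmx_mul map_mxM. Qed.

Lemma adjmxZ m n a (A : 'M[R[i]]_(m, n)) : adjmx (a *: A) = a^* *: adjmx A.
Proof. by rewrite /adjmx linearZ map_mxZ. Qed.

Lemma adjmx_mul_cV n (u v : 'cV[R[i]]_n) : adjmx u *m v = (inner u v)%:M.
Proof.
apply/matrixP => i j; rewrite !ord1 !mxE eqxx mulr1n.
by apply: eq_bigr => k _; rewrite !mxE.
Qed.

Variable n : nat.
Implicit Types u v x y : 'cV[R[i]]_n.

Lemma innerZ a b x y : inner (a *: x) (b *: y) = a^* * b * inner x y.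
Proof.
by rewrite /inner mulr_sumr; apply: eq_bigr => k _; rewrite !mxE rmorphM; ring.
Qed.

Lemma innerBl x y v : inner (x - y) v = inner x v - inner y v.
Proof. by rewrite /inner -sumrB; apply: eq_bigr => k _; rewrite !mxE rmorphB; ring. Qed.

Lemma innerBr u x y : inner u (x - y) = inner u x - inner u y.
Proof. by rewrite /inner -sumrB; apply: eq_bigr => k _; rewrite !mxE; ring. Qed.

Lemma inner_conj u v : (inner u v)^*%R = inner v u.
Proof.
by rewrite /inner rmorph_sum; apply: eq_bigr => k _; rewrite rmorphM /= conjCK mulrC.
Qed.

Lemma inner_eq0 u : (inner u u == 0) = (u == 0).
Proof.
apply/eqP/eqP => [|->]; last by rewrite /inner big1 // => k _; rewrite mxE mulr0.
rewrite /inner => /eqP; rewrite psumr_eq0 => [/allP u0|k _]; last first.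
  by rewrite mulrC mul_conjC_ge0.
apply/matrixP => i j; rewrite ord1 mxE.
by move: (u0 i (mem_index_enum _)) => /=; rewrite mulf_eq0 conjC_eq0 orbb => /eqP ->.
Qed.

End InnerProduct.

Lemma hs_normE (R : realType) n (A : 'M[R[i]]_n) :
  hs_norm A = Num.sqrt (Re (\tr (A *m adjmx A))).
Proof.
rewrite /hs_norm /mxtrace raddf_sum; congr Num.sqrt; apply: eq_bigr => i _ /=.
rewrite mxE raddf_sum; apply: eq_bigr => j _ /=.
by rewrite !mxE -Re_mul_conj.
Qed.

Section PhaseMatrix.
Variables (R : realType) (n : nat).
Implicit Types (P : 'M[R[i]]_n) (v x y : 'cV[R[i]]_n).

Definition phase_mx P (w : R[i]) : 'M[R[i]]_n := 1%:M - P + w *: P.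

Lemma phase_mx_mulmx m P w (v : 'M[R[i]]_(n, m)) :
  phase_mx P w *m v = v + (w - 1) *: (P *m v).
Proof.
by rewrite mulmxDl mulmxBl mul1mx -scalemxAl scalerBl scale1r addrAC addrA.
Qed.

Lemma phase_mx1 P : phase_mx P 1 = 1%:M.
Proof. by rewrite /phase_mx scale1r subrK. Qed.

Lemma phase_mxM P a b : P *m P = P ->
  phase_mx P a *m phase_mx P b = phase_mx P (a * b).
Proof.
move=> P_idem; rewrite phase_mx_mulmx {2}/phase_mx mulmxDr mulmxBr mulmx1.
rewrite -scalemxAr P_idem subrr add0r scalerA /phase_mx -addrA -scalerDl.
by congr (_ + _ *: _); ring.
Qed.

Lemma phase_mx_eigen P w v mu : P *m v = mu *: v ->
  phase_mx P w *m v = (1 + (w - 1) * mu) *: v.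
Proof. by move=> Pv; rewrite phase_mx_mulmx Pv scalerA scalerDl scale1r. Qed.

Lemma phase_mx_transition P w x y :
  P *m (x - y) = x - y -> P *m x = w *: (P *m y) -> x = phase_mx P w *m y.
Proof.
move=> Pxy Px; rewrite phase_mx_mulmx scalerBl scale1r -Px -mulmxBr Pxy.
by rewrite addrC subrK.
Qed.

End PhaseMatrix.

Section ExponentialOfProjector.
Variables (R : realType) (n : nat).
Implicit Types (A B P : 'M[R[i]]_n).

Lemma expmx_cvg A B :
  (forall i j, cvgC (fun N => expmx_partial A N.+1 i j) (B i j)) -> expmx A = B.
Proof.
move=> cvgB; apply/matrixP => i j; have [ReB ImB] := cvgB i j; rewrite mxE.
have /cvg_lim-> // : Re (expmx_partial A N i j) @[N --> \oo] --> Re (B i j).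
  by rewrite -cvg_shiftS; exact: ReB.
have /cvg_lim-> // : Im (expmx_partial A N i j) @[N --> \oo] --> Im (B i j).
  by rewrite -cvg_shiftS; exact: ImB.
by case: (B i j).
Qed.

Lemma exprZ_idem P c k : P *m P = P -> (c *: P) ^+ k.+1 = c ^+ k.+1 *: P.
Proof.
move=> P_idem; elim: k => [|k IH]; first by rewrite !expr1.
by rewrite exprS IH -mulmxE -scalemxAr -scalemxAl P_idem scalerA -exprSr.
Qed.

Lemma expmx_partial_idem P c N : P *m P = P ->
  expmx_partial (c *: P) N.+1 = phase_mx P (\sum_(k < N.+1) (k`!%:R)^-1 * c ^+ k).
Proof.
move=> P_idem; elim: N => [|N IH].
  by rewrite /expmx_partial /phase_mx !big_ord1 !expr0 fact0 invr1 mulr1 !scale1r subrK.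
rewrite /expmx_partial big_ord_recr /= -/(expmx_partial _ _) IH [in RHS]big_ord_recr /=.
by rewrite /phase_mx scalerDl addrA exprZ_idem // scalerA.
Qed.

Lemma expmx_idem P e : P *m P = P -> expmx ((0 +i* e) *: P) = phase_mx P (expi e).
Proof.
move=> P_idem; apply: expmx_cvg => i j.
have phase_mxE w : phase_mx P w i j = (1%:M - P) i j + w * P i j by rewrite !mxE.
rewrite phase_mxE; under eq_fun do rewrite expmx_partial_idem // phase_mxE.
exact: cvgC_affine (cvgC_expi_partial e).
Qed.

End ExponentialOfProjector.

Section RankOneProjector.
Variables (R : realType) (n : nat).

Definition projmx (u : 'cV[R[i]]_n) : 'M[R[i]]_n := (inner u u)^-1 *: (u *m adjmx u).

Variable u : 'cV[R[i]]_n.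

Lemma projmx_mulmx v : projmx u *m v = (inner u v / inner u u) *: u.
Proof.
by rewrite /projmx -scalemxAl -mulmxA adjmx_mul_cV mul_mx_scalar scalerA mulrC.
Qed.

Lemma projmx_selfadjoint : selfadjoint (projmx u).
Proof.
rewrite /selfadjoint /projmx adjmxZ adjmxM adjmxK fmorphV.
by congr (_^-1 *: _); exact: inner_conj.
Qed.

Hypothesis u_neq0 : u != 0.

Let inner_uu_neq0 : inner u u != 0. Proof. by rewrite inner_eq0. Qed.

Lemma projmx_id : projmx u *m u = u.
Proof. by rewrite projmx_mulmx divff // scale1r. Qed.

Lemma projmx_idem : projmx u *m projmx u = projmx u.
Proof. by rewrite {2}/projmx -scalemxAr mulmxA projmx_id. Qed.

Lemma mxtrace_projmx : \tr (projmx u) = 1.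
Proof. by rewrite mxtraceZ mxtrace_mulC adjmx_mul_cV mxtrace_scalar mulVf. Qed.

Lemma hs_norm_projmx : hs_norm (projmx u) = 1.
Proof. by rewrite hs_normE projmx_selfadjoint projmx_idem mxtrace_projmx sqrtr1. Qed.

Lemma projmx_neq1 : (2 <= n)%N -> projmx u != 1%:M.
Proof.
move=> n_ge2; apply/eqP => P1; move: mxtrace_projmx.
by rewrite P1 mxtrace1 => /eqP; rewrite pnatr_eq1 => /eqP n1; rewrite n1 in n_ge2.
Qed.

End RankOneProjector.

Section SphereTransition.
Variables (R : realType) (n : nat) (x y : 'cV[R[i]]_n).
Hypotheses (x_unit : on_sphere x) (y_unit : on_sphere y) (xy_neq0 : x - y != 0).

Lemma inner_sphere_neq1 : inner x y != 1.
Proof.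
apply: contra xy_neq0 => /eqP xy1; rewrite -inner_eq0 !innerBl !innerBr.
by rewrite x_unit y_unit -[inner y x]inner_conj xy1 conjC1 !subrr.
Qed.

Lemma sphere_transition :
  exists2 w : R[i], w^* * w = 1 & x = phase_mx (projmx (x - y)) w *m y.
Proof.
set z := inner x y.
have z_neq1 : 1 - z != 0 by rewrite subr_eq0 eq_sym inner_sphere_neq1.
exists (- (1 - z)^*%R / (1 - z)).
  rewrite rmorphM rmorphN fmorphV /= conjCK; field.
  by rewrite z_neq1 /= -conjC1 -rmorphB conjC_eq0.
apply: phase_mx_transition; first exact: projmx_id.
have D_neq0 : inner (x - y) (x - y) != 0 by rewrite inner_eq0.
rewrite !projmx_mulmx scalerA [inner _ x]innerBl [inner _ y]innerBl x_unit y_unit.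
rewrite -[inner y x]inner_conj -/z; congr (_ *: _).
by rewrite rmorphB /= conjC1; field; rewrite D_neq0.
Qed.

End SphereTransition.

Section EquivalenceClasses.
Variables (R : realType) (n : nat).
Implicit Types (x y : 'cV[R[i]]_n) (P : 'M[R[i]]_n).

Lemma eq_class_sym x y : eq_class x y -> eq_class y x.
Proof. by case=> rho ->; exists (- rho); rewrite scalerA expiNK scale1r. Qed.

Lemma eq_class_scale x c : on_sphere x -> on_sphere (c *: x) -> eq_class x (c *: x).
Proof.
rewrite /on_sphere innerZ => -> /eqP; rewrite mulr1 => /eqP /expi_onto [rho _ <-].
by exists rho.
Qed.

Lemma eigen_phase_mx_eq_class P w x y mu :
  on_sphere x -> on_sphere y -> y = phase_mx P w *m x -> P *m x = mu *: x ->
  eq_class x y.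
Proof.
move=> x_unit y_unit yE /(phase_mx_eigen w) Px; rewrite yE Px in y_unit *.
exact: eq_class_scale.
Qed.

End EquivalenceClasses.

Theorem lemma1 (R : realType) (n : nat) (psi1 psi2 : 'cV[R[i]]_n) :
  (2 <= n)%N ->
  on_sphere psi1 -> on_sphere psi2 ->
  ~ (eq_class psi2 psi1) ->
  exists (eps : R) (H' : 'M[R[i]]_n),
    0 < eps /\ selfadjoint H' /\ hs_norm H' = 1 /\ H' != 1%:M /\
    psi1 = expmx ((0 +i* eps) *: H') *m psi2 /\
    ~ eigenvector H' psi1 /\ ~ eigenvector H' psi2.
Proof.
move=> n_ge2 psi1_unit psi2_unit not_class.
have psi12_neq0 : psi1 - psi2 != 0.
  apply: contra_notN not_class; rewrite subr_eq0 => /eqP->.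
  by exists 0; rewrite expi0 scale1r.
set P := projmx (psi1 - psi2).
have P_idem : P *m P = P := projmx_idem psi12_neq0.
have [w w_unit psi1E] := sphere_transition psi1_unit psi2_unit psi12_neq0.
have w_neq1 : w != 1.
  by apply: contraNneq psi12_neq0 => w1; rewrite psi1E w1 phase_mx1 mul1mx subrr.
have w_neq0 : w != 0.
  by apply: contra_eq_neq w_unit => ->; rewrite mulr0 eq_sym oner_neq0.
have psi2E : psi2 = phase_mx P w^-1 *m psi1.
  by rewrite psi1E mulmxA phase_mxM // mulVf // phase_mx1 mul1mx.
have [eps eps_ge0 eps_w] := expi_onto w_unit.
exists eps, P; do !split.
- rewrite lt_def eps_ge0 andbT; apply: contraNneq w_neq1 => eps0.
  by rewrite -eps_w eps0 expi0.
- exact: projmx_selfadjoint.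
- exact: hs_norm_projmx.
- exact: projmx_neq1.
- by rewrite expmx_idem // eps_w.
- by case=> _ [mu /(eigen_phase_mx_eq_class psi1_unit psi2_unit psi2E)/eq_class_sym].
- by case=> _ [mu /(eigen_phase_mx_eq_class psi2_unit psi1_unit psi1E)].
Qed.
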